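(* Let $q$ be a prime power, $m>4$, $V=\mathbb F_q^m$, and $\mu=m-1$. Every $(\mu+1)$-dimensional subspace of $\bigwedge^2V$ contains at most $(q^{\mu}-1)+q^2(q-1)$ decomposable vectors.
   Context: A nonzero $\omega\in\bigwedge^2V$ is decomposable if $\omega=u\wedge v$ for some $u,v\in V$. *)

From HB Require Import structures.
From mathcomp Require Import all_boot all_order all_algebra all_field.
Set Implicit Arguments. Unset Strict Implicit. Unset Printing Implicit Defensive.
Import GRing.Theory.
Local Open Scope ring_scope.

(* Model of the exterior square  /\^2 V  for V = F^m (vectors = row vectors
   'rV[F]_m): the space of alternating m x m matrices (zero diagonal,
   A^T = -A), with  u /\ v  :=  u^T v - v^T u  (entry (i,j) = u_i v_j - u_j v_i,
   the Plücker coordinates of u /\ v). *)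
Definition wedge (F : fieldType) (m : nat) (u v : 'rV[F]_m) : 'M[F]_m :=
  u^T *m v - v^T *m u.

Definition alternating (F : fieldType) (m : nat) (A : 'M[F]_m) : bool :=
  [forall i, A i i == 0] && (A^T == - A).

Definition decomposable (F : finFieldType) (m : nat) (A : 'M[F]_m) : bool :=
  (A != 0) && [exists u : 'rV[F]_m, exists v : 'rV[F]_m, A == wedge u v].

From HB Require Import structures.
From mathcomp Require Import all_boot all_order all_algebra all_field.
From mathcomp Require Import ring zify.
Set Implicit Arguments. Unset Strict Implicit. Unset Printing Implicit Defensive.
Import GRing.Theory.

(* A sum u /\ v + u' /\ v' of two nonzero decomposable vectors is decomposable
   only if the planes <u, v> and <u', v'> meet: writing the sum as N^T J N with
   J invertible, the four vectors cannot be free.  Put star p := p /\ V, a space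
   of dimension < m.
   If W :&: star p has dimension d >= 3 for some p, the decomposable vectors
   outside it are spread over the q^m - q^d vectors of W outside it in cosets of
   size q^d; each coset meets at most q^2 of them, since two such vectors differ
   by p /\ x with x forced into a plane.  This gives q^d - 1 + q^(m+2-d) - q^2.
   Otherwise take a decomposable a /\ b in W.  The stars of the q + 1 points of
   <a, b> meet W in planes through a /\ b whose union U has at most q^3
   vectors, and every line y + F (a /\ b) outside U contains at most one
   decomposable vector.  Both counts are at most q^(m-1) - 1 + q^2 (q - 1). *)

Lemma card_bigcup_leq (I T : finType) (S : I -> {set T}) :
  #|\bigcup_i S i| <= \sum_i #|S i|.
Proof.
elim/big_rec2: _ => [|i X x _ le_X_x]; first by rewrite cards0.
by apply: leq_trans (leq_card_setU _ _).1 _; rewrite leq_add2l.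
Qed.

Lemma double_count (T : finType) (A B : {set T}) (R : rel T) (k l : nat) :
  (forall a, a \in A -> #|[set y | R a y]| = k) ->
  (forall y, y \in B -> #|[set a in A | R a y]| <= l) ->
  (forall a y, a \in A -> R a y -> y \in B) ->
  #|A| * k <= #|B| * l.
Proof.
move=> card_out card_in RAB.
have -> : #|A| * k = \sum_(a in A) \sum_y (if R a y then 1 else 0).
  rewrite -sum_nat_const; apply: eq_bigr => a aA.
  by rewrite -(card_out a aA) -big_mkcond sum1dep_card.
rewrite exchange_big (bigID [in B]) /= [X in _ + X]big1 ?addn0; last first.
  move=> y yB; apply: big1 => a aA; case: ifP => // Ray.
  by rewrite (RAB a y aA Ray) in yB.
rewrite -sum_nat_const; apply: leq_sum => y yB; rewrite -big_mkcondr sum1_card.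
by apply: leq_trans (card_in y yB); apply: subset_leq_card; apply/subsetP => a; rewrite !inE.
Qed.

(* q^d + q^(m+2-d) is convex in d, so it is largest at d = 3 and d = m - 1. *)
Lemma star_bound_arith q m d x y : 1 < q -> 3 <= d -> d < m ->
  x <= q ^ d - 1 -> y * q ^ d <= (q ^ m - q ^ d) * q ^ 2 ->
  x + y <= (q ^ (m - 1) - 1) + q ^ 2 * (q - 1).
Proof.
move=> q_gt1 d_ge3 d_lt_m.
have [i ed] : exists i, d = i + 3 by exists (d - 3); lia.
rewrite {d d_ge3}ed in d_lt_m *.
have [j ->] : exists j, m = j + i + 4 by exists (m - i - 4); lia.
rewrite (_ : j + i + 4 - 1 = j + i + 3); last by lia.
rewrite !expnD !expnS expn0 muln1.
have a_gt0 : 0 < q ^ i by rewrite expn_gt0; lia.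
have b_gt0 : 0 < q ^ j by rewrite expn_gt0; lia.
move: (q ^ i) (q ^ j) a_gt0 b_gt0 => a b a_gt0 b_gt0 hx hy.
have {}hy : y <= (b * q - 1) * (q * q).
  rewrite -(@leq_pmul2r (a * (q * (q * q)))); last by rewrite !muln_gt0; lia.
  apply: leq_trans hy _; apply: eq_leq; rewrite !mulnBl mul1n; congr (_ - _); ring.
have convex : a + b <= a * b + 1 by nia.
move: (leq_mul (leqnn (q * (q * q))) convex) hy; rewrite mulnBr mulnBl !mulnDr !muln1 mul1n.
have : q * q <= b * q * (q * q) by rewrite leq_pmull // muln_gt0 b_gt0; lia.
have : q * q <= q * q * q by rewrite leq_pmulr //; lia.
have : 0 < a * (q * (q * q)) by rewrite !muln_gt0 a_gt0; lia.
lia.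
Qed.

Lemma pencil_bound_arith q m u x y : 1 < q -> 0 < m -> 0 < u -> u <= q ^ 3 -> u <= q ^ m ->
  x <= u - 1 -> y * q <= q ^ m - u ->
  x + y <= (q ^ (m - 1) - 1) + q ^ 2 * (q - 1).
Proof.
move=> q_gt1 m_gt0 u_gt0 u_le3 u_lem hx hy.
have em : q ^ m = q ^ (m - 1) * q by rewrite -expnSr subn1 prednK.
rewrite em in u_lem hy; rewrite !expnS expn0 muln1 in u_le3 *.
move: (q ^ (m - 1)) u_lem hy => Q u_lem hy.
rewrite -(@leq_pmul2r q); last lia.
have : u * (q - 1) <= q * (q * q) * (q - 1) by rewrite leq_mul2r u_le3 orbT.
have : x * q <= (u - 1) * q by rewrite leq_mul2r hx orbT.
rewrite !mulnDl !mulnBr !mulnBl !muln1 !mul1n.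
have : u <= u * q by rewrite leq_pmulr; lia.
have : q <= u * q by rewrite leq_pmull.
have : q <= Q * q by rewrite leq_pmull //; lia.
have : q * q * q <= q * q * q * q by rewrite leq_pmulr; lia.
have : q * q <= q * q * q by rewrite leq_pmulr; lia.
lia.
Qed.

Lemma pencil_card_arith q : q + q.+1 * (q ^ 2 - q) = q ^ 3.
Proof. rewrite !expnS expn0 !muln1; nia. Qed.

Local Open Scope ring_scope.

Section Wedge.
Variables (F : fieldType) (m : nat).
Implicit Types (a b c d e f p u v x : 'rV[F]_m) (s t : F).

Lemma wedgeE u v i j : wedge u v i j = u 0 i * v 0 j - v 0 i * u 0 j.
Proof. by rewrite !mxE !big_ord1 !mxE. Qed.

Lemma wedgeDl u v w : wedge (u + v) w = wedge u w + wedge v w.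
Proof. by apply/matrixP=> i j; rewrite [RHS]mxE ?wedgeE !mxE; ring. Qed.

Lemma wedgeDr u v w : wedge w (u + v) = wedge w u + wedge w v.
Proof. by apply/matrixP=> i j; rewrite [RHS]mxE ?wedgeE !mxE; ring. Qed.

Lemma wedgeZl s u v : wedge (s *: u) v = s *: wedge u v.
Proof. by apply/matrixP=> i j; rewrite [RHS]mxE ?wedgeE !mxE; ring. Qed.

Lemma wedgeZr s u v : wedge u (s *: v) = s *: wedge u v.
Proof. by apply/matrixP=> i j; rewrite [RHS]mxE ?wedgeE !mxE; ring. Qed.

Lemma wedgeC u v : wedge v u = - wedge u v.
Proof. by apply/matrixP=> i j; rewrite [RHS]mxE ?wedgeE; ring. Qed.

Lemma wedgevv u : wedge u u = 0.
Proof. by apply/matrixP=> i j; rewrite [RHS]mxE wedgeE; ring. Qed.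

Lemma wedge0r u : wedge u 0 = 0.
Proof. by apply/matrixP=> i j; rewrite [RHS]mxE wedgeE !mxE; ring. Qed.

Lemma wedge0l u : wedge 0 u = 0.
Proof. by rewrite wedgeC wedge0r oppr0. Qed.

Definition wedge_with p x := wedge p x.

Fact wedge_with_is_linear p : linear (wedge_with p).
Proof. by move=> s x y; rewrite /wedge_with wedgeDr wedgeZr. Qed.

HB.instance Definition _ p := GRing.isLinear.Build F 'rV[F]_m 'M[F]_m _
  (wedge_with p) (wedge_with_is_linear p).

Definition star p : {vspace 'M[F]_m} := limg (linfun (wedge_with p)).

Lemma starP p w : reflect (exists x, w = wedge p x) (w \in star p).
Proof.
apply: (iffP memv_imgP) => [[x _ ->]|[x ->]]; first by exists x; rewrite lfunE.
by exists x; rewrite ?memvf ?lfunE.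
Qed.

Lemma dim_star p : p != 0 -> (\dim (star p) < m)%N.
Proof.
move=> p_neq0; have := limg_ker_dim (linfun (wedge_with p)) fullv.
rewrite capfv dimvf /dim /= mul1n -/(star p) => dim_sum.
apply: leq_trans (eq_leq dim_sum); rewrite -add1n leq_add2r lt0n dimv_eq0.
apply: contra_neq p_neq0 => ker0.
by apply/eqP; rewrite -memv0 -ker0 memv_ker lfunE /= /wedge_with wedgevv.
Qed.

Definition symplectic_mx k : 'M[F]_(k + k) := block_mx 0 1%:M (- 1%:M) 0.

Lemma symplectic_mx_unit k : symplectic_mx k \in unitmx.
Proof.
have J2 : symplectic_mx k *m - symplectic_mx k = 1%:M.
  rewrite mulmxN mulmx_block !mulmx0 !mul0mx !mulmxN !mulNmx !mulmx1 !add0r !addr0.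
  by rewrite (scalar_mx_block k k) opp_block_mx !opprK oppr0.
by case/mulmx1_unit: J2.
Qed.

Lemma alternating_form k (X Y : 'M[F]_(k, m)) :
  X^T *m Y - Y^T *m X = (col_mx X Y)^T *m symplectic_mx k *m col_mx X Y.
Proof.
rewrite tr_col_mx mul_row_block !mulmx0 !mulmxN !mulmx1 !add0r addr0.
by rewrite mul_row_col mulNmx addrC.
Qed.

Lemma wedge_add_form a b c d : wedge a b + wedge c d =
  (col_mx a c)^T *m col_mx b d - (col_mx b d)^T *m col_mx a c.
Proof. by rewrite /wedge !tr_col_mx !mul_row_col opprD addrACA. Qed.

Lemma rank_wedge u v : (\rank (wedge u v) <= 2)%N.
Proof.
rewrite /wedge -mulNmx; apply: leq_trans (mxrank_add _ _) _.
by apply: (@leq_add _ _ 1 1); apply: leq_trans (mxrankM_maxl _ _) (rank_leq_col _).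
Qed.

(* For free rows N^T J N has the rank 4 of J, while a decomposable has rank 2. *)
Lemma wedge_add_not_free a b c d e f : wedge a b + wedge c d = wedge e f ->
  ~~ row_free (col_mx (col_mx a c) (col_mx b d)).
Proof.
move=> sum_eq; apply/negP => free; have := rank_wedge e f.
rewrite -sum_eq wedge_add_form alternating_form mxrankMfree //.
by rewrite mxrankMfree ?row_free_unit ?symplectic_mx_unit // mxrank_tr (eqP free).
Qed.

Definition in_span2 p a b := exists s t, p = s *: a + t *: b.

Lemma col_mx4_dependent a b c d : ~~ row_free (col_mx (col_mx a c) (col_mx b d)) ->
  exists s t s' t', [|| s != 0, t != 0, s' != 0 | t' != 0] /\
    s *: a + t *: b = s' *: c + t' *: d.
Proof.
rewrite -kermx_eq0 => /rowV0Pn [k /sub_kermxP k_ker k_neq0].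
move: k_neq0 k_ker; rewrite -(hsubmxK k) -(hsubmxK (lsubmx k)) -(hsubmxK (rsubmx k)).
set k0 := lsubmx (lsubmx k); set k1 := rsubmx (lsubmx k).
set k2 := lsubmx (rsubmx k); set k3 := rsubmx (rsubmx k).
rewrite !mul_row_col (mx11_scalar k0) (mx11_scalar k1) (mx11_scalar k2) (mx11_scalar k3).
rewrite !mul_scalar_mx => k_neq0 k_ker.
exists (k0 0 0), (k2 0 0), (- k1 0 0), (- k3 0 0); split.
  rewrite !oppr_eq0; apply: contraR k_neq0.
  by rewrite !negb_or !negbK => /and4P [/eqP-> /eqP-> /eqP-> /eqP->]; rewrite !raddf0 !row_mx0.
by apply/eqP; rewrite !scaleNr -opprD -addr_eq0 addrACA k_ker.
Qed.

Lemma wedge_eq0_dep a b s t : s *: a + t *: b = 0 -> (s != 0) || (t != 0) ->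
  wedge a b = 0.
Proof.
move=> comb_eq0 /orP [s_neq0|t_neq0].
  have sa : s *: a = - t *: b by apply/eqP; rewrite scaleNr -addr_eq0 comb_eq0.
  by rewrite -(scalerK s_neq0 a) sa scalerA wedgeZl wedgevv scaler0.
have tb : t *: b = - s *: a by apply/eqP; rewrite scaleNr -addr_eq0 addrC comb_eq0.
by rewrite -(scalerK t_neq0 b) tb scalerA wedgeZr wedgevv scaler0.
Qed.

Lemma wedge_in_star_span p a b : in_span2 p a b -> p != 0 -> wedge a b \in star p.
Proof.
move=> [s [t ->]] p_neq0; apply/starP.
have [s0 | s_neq0] := eqVneq s 0.
  move: p_neq0; rewrite s0 scale0r add0r scaler_eq0 negb_or => /andP [t_neq0 _].
  exists (- t^-1 *: a); rewrite wedgeZr wedgeZl [wedge b a]wedgeC.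
  by rewrite scalerA mulNr mulVf // scaleN1r opprK.
exists (s^-1 *: b).
by rewrite wedgeZr wedgeDl !wedgeZl wedgevv scaler0 addr0 scalerA mulVf // scale1r.
Qed.

Lemma wedge_add_meet a b c d e f : wedge a b + wedge c d = wedge e f ->
  wedge a b != 0 -> wedge c d != 0 ->
  exists2 p, p != 0 & in_span2 p a b /\ in_span2 p c d.
Proof.
move=> sum_eq ab_neq0 cd_neq0.
have [s [t [s' [t' [nontriv comb_eq]]]]] := col_mx4_dependent (wedge_add_not_free sum_eq).
have [p0 | p_neq0] := eqVneq (s *: a + t *: b) 0.
  have p0' : s' *: c + t' *: d = 0 by rewrite -comb_eq.
  case/or4P: nontriv => k_neq0.
  - by rewrite (wedge_eq0_dep p0) ?k_neq0 ?eqxx in ab_neq0.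
  - by rewrite (wedge_eq0_dep p0) ?k_neq0 ?orbT ?eqxx in ab_neq0.
  - by rewrite (wedge_eq0_dep p0') ?k_neq0 ?eqxx in cd_neq0.
  - by rewrite (wedge_eq0_dep p0') ?k_neq0 ?orbT ?eqxx in cd_neq0.
by exists (s *: a + t *: b) => //; split; [exists s, t | exists s', t'].
Qed.

Lemma wedge_add_star a b p x e f : wedge a b + wedge p x = wedge e f ->
  p != 0 -> wedge a b \notin star p ->
  exists s t, wedge p x = wedge p (s *: a + t *: b).
Proof.
move=> sum_eq p_neq0 ab_notin.
have ab_neq0 : wedge a b != 0 by apply: contraNneq ab_notin => ->; rewrite mem0v.
have [px0 | px_neq0] := eqVneq (wedge p x) 0.
  by exists 0, 0; rewrite px0 !scale0r addr0 wedge0r.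
have [r r_neq0 [[s [t r_ab]] [k [l r_px]]]] := wedge_add_meet sum_eq ab_neq0 px_neq0.
have [l0 | l_neq0] := eqVneq l 0.
  have k_neq0 : k != 0 by apply: contraNneq r_neq0 => k0; rewrite r_px k0 l0 !scale0r addr0.
  case/negP: ab_notin; apply: wedge_in_star_span p_neq0; exists (k^-1 * s), (k^-1 * t).
  by rewrite -!scalerA -scalerDr -r_ab r_px l0 scale0r addr0 scalerA mulVf // scale1r.
exists (l^-1 * s), (l^-1 * t).
rewrite -!scalerA -scalerDr -r_ab r_px wedgeZr wedgeDr !wedgeZr wedgevv scaler0.
by rewrite add0r scalerA mulVf // scale1r.
Qed.

(* Representatives a + t b and b of the q + 1 points of the projective line <a, b>. *)
Definition pencil a b (o : option F) := if o is Some t then a + t *: b else b.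

Lemma wedge_in_star_pencil a b o : wedge a b \in star (pencil a b o).
Proof.
apply/starP; case: o => [t|] /=.
  by exists b; rewrite wedgeDl wedgeZl wedgevv scaler0 addr0.
by exists (- a); rewrite -scaleN1r wedgeZr scaleN1r -wedgeC.
Qed.

Lemma star_pencil a b p x : in_span2 p a b ->
  exists o, wedge p x \in star (pencil a b o).
Proof.
move=> [s [t ->]]; have [s0|s_neq0] := eqVneq s 0.
  exists None; apply/starP; exists (t *: x) => /=.
  by rewrite s0 scale0r add0r wedgeZl wedgeZr.
exists (Some (t / s)); apply/starP; exists (s *: x) => /=.
by rewrite wedgeZr -wedgeZl scalerDr scalerA mulrCA mulfV // mulr1.
Qed.

End Wedge.

Section Decomposables.
Variables (F : finFieldType) (m : nat) (W : {vspace 'M[F]_m}).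
Hypothesis dimW : \dim W = m.
Local Notation q := #|F|.
Local Notation D := [set w : 'M[F]_m | (w \in W) && decomposable w].

Lemma decomposableP (w : 'M[F]_m) :
  reflect (w != 0 /\ exists u v, w = wedge u v) (decomposable w).
Proof.
rewrite /decomposable.
apply: (iffP andP) => [[w_neq0 /existsP [u /existsP [v /eqP w_uv]]]|[w_neq0 [u [v w_uv]]]].
  by split=> //; exists u, v.
by split=> //; apply/existsP; exists u; apply/existsP; exists v; apply/eqP.
Qed.

Lemma card_field_gt1 : (1 < q)%N.
Proof. exact: finNzRing_gt1. Qed.

Lemma card_vspace_set (V : {vspace 'M[F]_m}) : #|[set w | w \in V]| = (q ^ \dim V)%N.
Proof. by rewrite cardsE card_vspace. Qed.

Lemma card_W : #|[set w | w \in W]| = (q ^ m)%N.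
Proof. by rewrite card_vspace_set dimW. Qed.

Section Split.
Variables (T : {set 'M[F]_m}) (S : {vspace 'M[F]_m}) (l : nat).
Hypotheses (T0 : 0 \in T) (TW : forall w, w \in T -> w \in W) (SW : (S <= W)%VS).
Hypothesis T_closed : forall w s, w \in T -> s \in S -> w + s \in T.
Hypothesis card_fiber :
  forall y, (#|[set a in D :\: T | (y - a)%R \in S]| <= l)%N.

Lemma card_dec_setI : (#|D :&: T| <= #|T| - 1)%N.
Proof.
rewrite (cardsD1 0 T) T0 add1n subn1 /=; apply: subset_leq_card.
apply/subsetP => w; rewrite !inE => /andP [/andP [_ /decomposableP [w_neq0 _]] wT].
by rewrite w_neq0.
Qed.

Lemma card_dec_setD : (#|D :\: T| * q ^ \dim S <= (q ^ m - #|T|) * l)%N.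
Proof.
have TW' : T \subset [set w | w \in W] by apply/subsetP => w /TW; rewrite inE.
rewrite -card_W -cardsDS //.
apply: (double_count (R := fun a y => y - a \in S)).
- move=> a _; rewrite -card_vspace_set.
  have -> : [set y | y - a \in S] = [set z + a | z in [set w | w \in S]].
    apply/setP => y; rewrite inE; apply/idP/imsetP => [Sya|[z Sz ->]].
      by exists (y - a); rewrite ?inE // subrK.
    by rewrite addrK; rewrite inE in Sz.
  by rewrite card_imset //; apply: addIr.
- by move=> y _; apply: card_fiber.
- move=> a y; rewrite !inE => /andP [aT /andP [aW _]] Sya.
  have -> : y \in W by rewrite -(subrK a y) memvD // (subvP SW).
  rewrite andbT; apply: contra aT => yT.
  have -> : a = y + - (y - a) by rewrite opprB addrC subrK.
  by rewrite T_closed ?rpredN.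
Qed.

End Split.

Section BigStar.
Variable p : 'rV[F]_m.
Hypothesis p_neq0 : p != 0.
Local Notation K := (W :&: star p)%VS.
Local Notation KS := [set w | w \in K].

Lemma card_fiber_star y : (#|[set a in D :\: KS | (y - a)%R \in K]| <= q ^ 2)%N.
Proof.
case: (set_0Vmem [set a in D :\: KS | y - a \in K]) => [-> | [a0]].
  by rewrite cards0.
rewrite !inE => /andP [/andP [a0K /andP [a0W /decomposableP [_ [u0 [v0 a0_uv]]]]] ya0].
have a0_notin : wedge u0 v0 \notin star p by rewrite -a0_uv; apply: contra a0K; rewrite memv_cap a0W.
apply: (@leq_trans #|[set a0 + wedge p (st.1 *: u0 + st.2 *: v0) | st : F * F]|).
  apply/subset_leq_card/subsetP => a; rewrite !inE.
  case/andP => /andP [_ /andP [_ /decomposableP [_ [u [v a_uv]]]]] ya.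
  have : a - a0 \in K by rewrite -(subrKA y) addrC -opprB memvB.
  rewrite memv_cap => /andP [_ /starP [x ax]].
  have sum_eq : wedge u0 v0 + wedge p x = wedge u v by rewrite -a0_uv -ax -a_uv addrC subrK.
  have [s [t px]] := wedge_add_star sum_eq p_neq0 a0_notin.
  by apply/imsetP; exists (s, t) => //=; rewrite -px -ax addrC subrK.
by apply: leq_trans (leq_imset_card _ _) _; rewrite card_prod mulnn.
Qed.

Lemma card_dec_big_star : (3 <= \dim K)%N ->
  (#|D| <= (q ^ (m - 1) - 1) + q ^ 2 * (q - 1))%N.
Proof.
move=> dimK_ge3.
have card_KS : #|KS| = (q ^ \dim K)%N := card_vspace_set K.
have KW w : w \in KS -> w \in W by rewrite inE memv_cap => /andP [].
have K_closed w s : w \in KS -> s \in K -> w + s \in KS by rewrite !inE; apply: memvD.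
rewrite -(cardsID KS D); apply: (star_bound_arith card_field_gt1 dimK_ge3).
- exact: leq_ltn_trans (dimvS (capvSr _ _)) (dim_star p_neq0).
- by rewrite -card_KS; apply: card_dec_setI; rewrite inE mem0v.
- by have := card_dec_setD KW (capvSl _ _) K_closed card_fiber_star; rewrite card_KS.
Qed.

End BigStar.

Section Pencil.
Variables a b : 'rV[F]_m.
Hypotheses (ab_in_W : wedge a b \in W) (ab_neq0 : wedge a b != 0).
Hypothesis small_stars : forall p, p != 0 -> (\dim (W :&: star p) <= 2)%N.
Local Notation L := [set w | w \in <[wedge a b]>%VS].
Local Notation U := [set w | (w \in W) && [exists o, w \in star (pencil a b o)]].

Lemma pencil_neq0 o : pencil a b o != 0.
Proof.
apply/negP => /eqP p0; have /starP [x ab_0x] := wedge_in_star_pencil a b o.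
by move: ab_neq0; rewrite ab_0x p0 wedge0l eqxx.
Qed.

(* U is covered by the q + 1 planes W :&: star (pencil a b o), which pairwise
   meet in the line through a /\ b. *)
Lemma card_pencil_stars : (#|U| <= q ^ 3)%N.
Proof.
pose K o := [set w | w \in (W :&: star (pencil a b o))%VS].
have card_L : #|L| = q by rewrite card_vspace_set dim_vline ab_neq0 expn1.
have LK o : L \subset K o.
  apply/subsetP => w; rewrite !inE memv_cap => /vlineP [k ->].
  by rewrite !memvZ // wedge_in_star_pencil.
have card_K o : (#|K o :\: L| <= q ^ 2 - q)%N.
  rewrite cardsDS // card_L leq_sub2r // card_vspace_set.
  by rewrite leq_exp2l ?card_field_gt1 // small_stars // pencil_neq0.
have U_sub : U \subset L :|: \bigcup_o (K o :\: L).
  apply/subsetP => w; rewrite !inE => /andP [wW /existsP [o wo]].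
  case: (boolP (w \in <[wedge a b]>%VS)) => //= w_notin.
  by apply/bigcupP; exists o => //; rewrite !inE w_notin memv_cap wW.
apply: leq_trans (subset_leq_card U_sub) _.
apply: leq_trans (leq_card_setU _ _).1 _.
rewrite -pencil_card_arith card_L leq_add2l.
apply: leq_trans (card_bigcup_leq _) _.
apply: (@leq_trans (\sum_(o : option F) (q ^ 2 - q))); first exact: leq_sum.
by rewrite sum_nat_const card_option.
Qed.

Lemma pencil_stars_closed w s : w \in U -> s \in <[wedge a b]>%VS -> w + s \in U.
Proof.
rewrite !inE => /andP [wW /existsP [o wo]] /vlineP [k ->].
rewrite memvD ?memvZ //=; apply/existsP; exists o.
by rewrite memvD ?memvZ ?wedge_in_star_pencil.
Qed.

(* Two decomposables outside U differing by a nonzero multiple of a /\ b would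
   force the first one into the star of a point of the pencil. *)
Lemma card_fiber_pencil y :
  (#|[set c in D :\: U | (y - c)%R \in <[wedge a b]>%VS]| <= 1)%N.
Proof.
case: (set_0Vmem [set c in D :\: U | y - c \in <[wedge a b]>%VS]) => [-> | [c0]].
  by rewrite cards0.
rewrite !inE => /andP [/andP [c0U /andP [c0W /decomposableP [c0_neq0 [u0 [v0 c0_uv]]]]] yc0].
rewrite -(cards1 c0); apply/subset_leq_card/subsetP => c; rewrite !inE.
case/andP => /andP [_ /andP [_ /decomposableP [_ [u [v c_uv]]]]] yc.
apply: contraNT c0U => c_neq_c0.
have /vlineP [s cc0] : c - c0 \in <[wedge a b]>%VS.
  by rewrite -(subrKA y) addrC -opprB memvB.
have s_neq0 : s != 0.
  by apply: contraNneq c_neq_c0 => s0; move/eqP: cc0; rewrite s0 scale0r subr_eq0.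
have sum_eq : wedge u0 v0 + wedge (s *: a) b = wedge u v.
  by rewrite wedgeZl -cc0 -c0_uv -c_uv addrC subrK.
have [||p p_neq0 [p_c0 [k [l p_ab]]]] := wedge_add_meet sum_eq.
- by rewrite -c0_uv.
- by rewrite wedgeZl scaler_eq0 negb_or s_neq0.
have /starP [x c0_px] := wedge_in_star_span p_c0 p_neq0.
have [o o_in] : exists o, wedge p x \in star (pencil a b o).
  by apply: star_pencil; exists (k * s), l; rewrite p_ab scalerA.
by rewrite c0W /=; apply/existsP; exists o; rewrite c0_uv c0_px.
Qed.

Lemma card_dec_pencil : (0 < m)%N ->
  (#|D| <= (q ^ (m - 1) - 1) + q ^ 2 * (q - 1))%N.
Proof.
move=> m_gt0.
have U0 : 0 \in U by rewrite inE mem0v; apply/existsP; exists None; rewrite mem0v.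
have UW w : w \in U -> w \in W by rewrite inE => /andP [].
have card_U_le : (#|U| <= q ^ m)%N.
  by rewrite -card_W; apply/subset_leq_card/subsetP => w /UW; rewrite inE.
have lineW : (<[wedge a b]> <= W)%VS by rewrite -memvE.
rewrite -(cardsID U D).
apply: (pencil_bound_arith card_field_gt1 m_gt0 _ card_pencil_stars card_U_le).
- by rewrite card_gt0; apply/set0Pn; exists 0.
- exact: card_dec_setI.
have := card_dec_setD UW lineW pencil_stars_closed card_fiber_pencil.
by rewrite dim_vline ab_neq0 expn1 muln1.
Qed.

End Pencil.

Lemma card_dec_small_stars : (0 < m)%N ->
  (forall p, p != 0 -> (\dim (W :&: star p) <= 2)%N) ->
  (#|D| <= (q ^ (m - 1) - 1) + q ^ 2 * (q - 1))%N.
Proof.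
move=> m_gt0 small_stars.
case: (set_0Vmem D) => [-> | [w0]]; first by rewrite cards0.
rewrite inE => /andP [w0W /decomposableP [w0_neq0 [a [b w0_ab]]]].
rewrite w0_ab in w0W w0_neq0.
exact: card_dec_pencil w0W w0_neq0 small_stars m_gt0.
Qed.

End Decomposables.

Theorem lemma6p6 (F : finFieldType) (m : nat) (hm : (4 < m)%N)
  (W : {vspace 'M[F]_m})
  (hW : forall w, w \in W -> alternating w)
  (hdim : \dim W = (m - 1).+1) :
  (#|[set w : 'M[F]_m | (w \in W) && decomposable w]|
     <= (#|F| ^ (m - 1) - 1) + #|F| ^ 2 * (#|F| - 1))%N.
Proof.
have m_gt0 : (0 < m)%N by apply: leq_trans hm.
have dimW : \dim W = m by rewrite hdim subn1 prednK.
have [/existsP [p /andP [p_neq0 big_star]] | no_big_star] :=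
  boolP [exists p : 'rV[F]_m, (p != 0) && (3 <= \dim (W :&: star p))%N].
  exact: (card_dec_big_star dimW p_neq0 big_star).
apply: card_dec_small_stars dimW m_gt0 _ => p p_neq0.
by move/existsPn/(_ p): no_big_star; rewrite p_neq0 /= -ltnNge ltnS.
Qed.
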